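(* Let $d\ge1$, $M>0$, and let $f:[0,1]^d\to\mathbb{R}$ satisfy $|f(x)-f(y)|\le M\|x-y\|_\infty$ for all $x,y\in[0,1]^d$; let $g(x)=f(x)\bmod 1$. Let $m>1$ be an integer, $x_i=\frac{i-1}{m-1}$ for $i\in[m]$, and for $\mathbf{i}=(i_1,\dots,i_d)\in[m]^d$ let $x_{\mathbf i}=(x_{i_1},\dots,x_{i_d})$; let $\mathcal X=\{x_{\mathbf i}:\mathbf i\in[m]^d\}$. Let $\delta\in[0,1/2]$ and $\hat g:[0,1]^d\to[0,1)$ satisfy $d_w(\hat g(x_{\mathbf i}),g(x_{\mathbf i}))\le\delta$ for all $\mathbf i\in[m]^d$. Define values $\tilde f(x_{\mathbf i})$ for all $\mathbf i\in[m]^d$ by the following sequential procedure: set $\tilde f(x_{(1,\dots,1)})=\hat g(x_{(1,\dots,1)})$ (the corner $(0,\dots,0)$); then for $j=1,\dots,d$, for each $(i_1,\dots,i_{j-1})\in[m]^{j-1}$ (a single empty tuple when $j=1$), with $i_{j+1}=\dots=i_d=1$, and for $i_j=2,\dots,m$ in increasing order, set $$\tilde f(x_{\mathbf i})=\tilde f(x_{\mathbf i-e_j})+\begin{cases}D_j\hat g(x_{\mathbf i}) & \text{if } |D_j\hat g(x_{\mathbf i})|<1/2,\\ 1+D_j\hat g(x_{\mathbf i}) & \text{if } D_j\hat g(x_{\mathbf i})<-1/2,\\ -1+D_j\hat g(x_{\mathbf i}) & \text{if } D_j\hat g(x_{\mathbf i})>1/2,\end{cases}$$ where $\mathbf i=(i_1,\dots,i_j,1,\dots,1)$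 and $\mathbf i-e_j=(i_1,\dots,i_j-1,1,\dots,1)$. If $2\delta+\frac{M}{m-1}<\frac12$, then there exists $q^\star\in\mathbb{Z}$ such that $|\tilde f(x_{\mathbf i})+q^\star-f(x_{\mathbf i})|\le\delta$ for all $x_{\mathbf i}\in\mathcal X$.
   Context: For $a\in\mathbb{R}$, $a\bmod1=a-\lfloor a\rfloor\in[0,1)$. The wrap-around distance on $[0,1)$ is $d_w(a,b)=\min(|a-b|,1-|a-b|)$. $[m]=\{1,\dots,m\}$. For a function $h$ on the grid and $\mathbf i\in[m]^d$ with $i_j>1$, $D_jh(x_{\mathbf i})=h(x_{i_1},\dots,x_{i_j},\dots,x_{i_d})-h(x_{i_1},\dots,x_{i_j-1},\dots,x_{i_d})$. The procedure visits every grid point exactly once, each after its predecessor along coordinate $j$ has been assigned. *)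

From mathcomp Require Import all_boot all_order all_algebra.
From mathcomp Require Import reals.
Set Implicit Arguments. Unset Strict Implicit. Unset Printing Implicit Defensive.
Import Order.TTheory GRing.Theory Num.Theory.
Local Open Scope ring_scope.

Definition mod1 (R : realType) (a : R) : R := a - (Num.floor a)%:~R.

Definition dw (R : realType) (a b : R) : R := Num.min `|a - b| (1 - `|a - b|).

Definition supnorm (R : realType) (d : nat) (x : 'I_d -> R) : R :=
  \big[Num.max/0]_(k < d) `|x k|.

Definition in_cube (R : realType) (d : nat) (x : 'I_d -> R) : Prop :=
  forall k, 0 <= x k <= 1.

(* grid point x_i, with 0-based index i : 'I_d -> 'I_m, coordinate i_k/(m-1) *)
Definition gridpt (R : realType) (d m : nat) (i : {ffun 'I_d -> 'I_m}) : 'I_d -> R :=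
  fun k => (i k)%:R / (m.-1)%:R.

(* Write ghat(x_i) = f(x_i) + k_i + e_i with k_i an integer and |e_i| <= delta.
   Along a step of the procedure, D_j ghat - (k_i - k_(i-e_j)) is within 2 delta
   of D_j f, so it has absolute value at most 2 delta + M/(m-1) < 1/2: the
   integer k_i - k_(i-e_j) is the one nearest to D_j ghat, which is exactly the
   integer the procedure subtracts.  Hence ft(x_i) - ghat(x_i) + k_i takes the
   same integer value k at every grid point, and q* = -k works. *)

From mathcomp Require Import all_boot all_order all_algebra.
From mathcomp Require Import reals ring lra.
Set Implicit Arguments. Unset Strict Implicit. Unset Printing Implicit Defensive.
Import Order.TTheory GRing.Theory Num.Theory.
Local Open Scope ring_scope.

Section Unwrapping.
Variable R : realType.

Definition unwraps (t t' D : R) : Prop :=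
  [/\ `|D| < 2^-1 -> t = t' + D,
      D < - 2^-1 -> t = t' + (1 + D)
    & D > 2^-1 -> t = t' + (-1 + D)].

Lemma intr_norm_lt1 (n : int) : `|n%:~R : R| < 1 -> n = 0.
Proof.
rewrite -intr_norm => lt1.
have : `|n| < 1 by rewrite -(ltr_int R).
by case: n {lt1} => [[|p]|p].
Qed.

Lemma dw_mod1_int_near (a b delta : R) : 0 <= a < 1 ->
  dw a (mod1 b) <= delta -> exists k : int, `|a - b - k%:~R| <= delta.
Proof.
move=> /andP[a0 a1]; rewrite /dw /mod1.
have fl := floor_le b; have fu := floorD1_gt b; rewrite intrD in fu.
set c := (Num.floor b)%:~R in fl fu *.
rewrite ge_min => /orP[near|wrapped].
  exists (- Num.floor b); rewrite intrN -/c opprK.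
  by move: near; congr (_ <= _); congr `|_|; ring.
have [pos|neg] := leP 0 (a - (b - c)).
- rewrite ger0_norm // in wrapped.
  exists (- Num.floor b + 1); rewrite intrD intrN -/c ler_norml; apply/andP; split; lra.
- rewrite ltr0_norm // in wrapped.
  exists (- Num.floor b - 1); rewrite intrD !intrN -/c ler_norml; apply/andP; split; lra.
Qed.

Lemma unwraps_nearest (t t' D : R) (n : int) :
  `|D| < 1 -> `|D - n%:~R| < 2^-1 -> unwraps t t' D -> t = t' + (D - n%:~R).
Proof.
rewrite !ltr_norml => /andP[D1 D2] /andP[n1 n2] [small below above].
have [Dlo|Dge] := ltrP D (- 2^-1).
  have /eqP : n + 1 = 0.
    by apply: intr_norm_lt1; rewrite intrD ltr_norml; apply/andP; split; lra.
  rewrite addr_eq0 => /eqP->; rewrite below // intrN opprK; ring.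
have [Dhi|Dle] := ltrP (2^-1) D.
  have /eqP : n - 1 = 0.
    by apply: intr_norm_lt1; rewrite intrB ltr_norml; apply/andP; split; lra.
  rewrite subr_eq0 => /eqP->; rewrite above //; ring.
have n0 : n = 0 by apply: intr_norm_lt1; rewrite ltr_norml; apply/andP; split; lra.
rewrite n0 subr0 in n1 n2 *; rewrite small // ltr_norml; apply/andP; split; lra.
Qed.

Lemma unwraps_int_invariant (t t' a a' b b' delta e : R) (k k' : int) :
  0 <= a < 1 -> 0 <= a' < 1 ->
  `|a - b - k%:~R| <= delta -> `|a' - b' - k'%:~R| <= delta ->
  `|b - b'| <= e -> 2 * delta + e < 2^-1 ->
  unwraps t t' (a - a') -> t - a + k%:~R = t' - a' + k'%:~R.
Proof.
move=> /andP[a0 a1] /andP[a0' a1'] hk hk' hb small /unwraps_nearest step.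
move: hk hk' hb; rewrite !ler_norml => /andP[? ?] /andP[? ?] /andP[? ?].
rewrite (step (k - k')); first by rewrite intrB; ring.
- by rewrite ltr_norml; apply/andP; split; lra.
- by rewrite intrB ltr_norml; apply/andP; split; lra.
Qed.

End Unwrapping.

Section Grid.
Variables (R : realType) (d m : nat).
Implicit Types i : {ffun 'I_d -> 'I_m}.

Lemma gridpt_in_cube i : in_cube (gridpt R i).
Proof.
move=> k; rewrite /gridpt divr_ge0 //=.
have [->|m1_gt0] := posnP m.-1; first by rewrite invr0 mulr0.
rewrite ler_pdivrMr ?ltr0n // mul1r ler_nat -ltnS prednK ?ltn_ord //.
exact: leq_trans m1_gt0 (leq_pred m).
Qed.

Lemma supnorm_gridpt_step (j : 'I_d) i i' :
  i j = (i' j).+1 :> nat -> (forall k, k != j -> i' k = i k) ->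
  supnorm (fun k => gridpt R i k - gridpt R i' k) <= (m.-1)%:R^-1.
Proof.
move=> ij i'k; apply: bigmax_le => [|k _]; first by rewrite invr_ge0.
rewrite /gridpt -mulrBl; have [->|kj] := eqVneq k j.
  by rewrite ij -addn1 natrD addrAC subrr add0r mul1r ger0_norm // invr_ge0.
by rewrite i'k // subrr mul0r normr0 invr_ge0.
Qed.

Lemma grid_scan_ind (P : {ffun 'I_d -> 'I_m} -> Prop) :
  (forall i, (forall k, i k = 0 :> nat) -> P i) ->
  (forall (j : 'I_d) i i', (forall k : 'I_d, (j < k)%N -> i k = 0 :> nat) ->
     i j = (i' j).+1 :> nat -> (forall k, k != j -> i' k = i k) -> P i' -> P i) ->
  forall i, P i.
Proof.
move=> corner step i; have [n] := ubnP (\sum_k (i k : nat)).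
elim: n i => // n IH i lt_n.
have [/existsP[k0 nz0]|/existsPn zero] := boolP [exists k, (i k : nat) != 0%N]; last first.
  by apply: corner => k; apply/eqP; rewrite -[_ == _]negbK zero.
have [j nzj jmax] := @arg_maxnP _ k0 (fun k => (i k : nat) != 0%N) val nz0.
pose p := Ordinal (leq_ltn_trans (leq_pred (i j)) (ltn_ord (i j))).
pose i' := [ffun k => if k == j then p else i k].
have ij : i j = (i' j).+1 :> nat by rewrite ffunE eqxx /= prednK // lt0n.
have i'k k : k != j -> i' k = i k by rewrite ffunE => /negbTE->.
apply: (step j i i') => //.
  by move=> k jk; apply/eqP; apply: contraTT jk => /jmax; rewrite -leqNgt.
apply: IH; rewrite (bigD1 j) //= (eq_bigr (fun k => i k : nat)) => [|k /i'k -> //].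
by move: lt_n; rewrite (bigD1 j) //= ij addSn ltnS.
Qed.

End Grid.

Theorem mainTheorem4 (R : realType) (d m : nat) (M delta : R)
  (f ghat : ('I_d -> R) -> R) (ft : {ffun 'I_d -> 'I_m} -> R) :
  (0 < d)%N -> 0 < M ->
  (forall x y, in_cube x -> in_cube y ->
     `|f x - f y| <= M * supnorm (fun k => x k - y k)) ->
  (1 < m)%N ->
  0 <= delta <= 2^-1 ->
  (forall x, in_cube x -> 0 <= ghat x < 1) ->
  (forall i : {ffun 'I_d -> 'I_m}, dw (ghat (gridpt R i)) (mod1 (f (gridpt R i))) <= delta) ->
  (* the procedure: corner *)
  (forall i : {ffun 'I_d -> 'I_m}, (forall k, i k = 0 :> nat) ->
     ft i = ghat (gridpt R i)) ->
  (* the procedure: step along coordinate j, from i' = i - e_j to i,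
     where i = (i_1,..,i_j,1,..,1) with i_j > 1 *)
  (forall (j : 'I_d) (i i' : {ffun 'I_d -> 'I_m}),
     (forall k : 'I_d, (j < k)%N -> i k = 0 :> nat) ->
     (i j = (i' j).+1 :> nat) ->
     (forall k, k != j -> i' k = i k) ->
     let D := ghat (gridpt R i) - ghat (gridpt R i') in
     [/\ `|D| < 2^-1 -> ft i = ft i' + D,
         D < - 2^-1 -> ft i = ft i' + (1 + D)
       & D > 2^-1 -> ft i = ft i' + (-1 + D)]) ->
  2 * delta + M / (m.-1)%:R < 2^-1 ->
  exists q : int, forall i : {ffun 'I_d -> 'I_m}, `|ft i + q%:~R - f (gridpt R i)| <= delta.
Proof.
move=> _ M_gt0 lipf m_gt1 _ ghat01 ghat_near corner step small.
have ghat01_grid (i : {ffun 'I_d -> 'I_m}) := ghat01 _ (gridpt_in_cube R i).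
have /fin_all_exists[n near] : forall i : {ffun 'I_d -> 'I_m},
    exists n : int, `|ghat (gridpt R i) - f (gridpt R i) - n%:~R| <= delta.
  by move=> i; exact: dw_mod1_int_near (ghat01_grid i) (ghat_near i).
pose o : {ffun 'I_d -> 'I_m} := [ffun=> Ordinal (ltnW m_gt1)].
suff inv i : ft i - ghat (gridpt R i) + (n i)%:~R = (n o)%:~R.
  exists (- n o) => i; rewrite intrN -(inv i).
  by move: (near i); congr (_ <= _); congr `|_|; ring.
elim/grid_scan_ind: i => [i zero | j i i' j_last ij i'k <-].
  have -> : i = o by apply/ffunP => k; apply/val_inj; rewrite ffunE /= zero.
  by rewrite corner ?subrr ?add0r // => k; rewrite ffunE.
apply: unwraps_int_invariant (ghat01_grid i) (ghat01_grid i') (near i) (near i') _ small _.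
  apply: le_trans (lipf _ _ (gridpt_in_cube R i) (gridpt_in_cube R i')) _.
  by rewrite ler_wpM2l ?(ltW M_gt0) // (supnorm_gridpt_step _ ij).
exact: step j i i' j_last ij i'k.
Qed.
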